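(* Let $(G,c)$ be a colored DAG containing edges $ij$ and $kl$, and let $A\in\mathcal A_G(ij)$ and $B\in\mathcal A_G(kl)$. If $c(ij)=c(kl)$ then $\mathrm{ecr}_c(ij,kl;A,B)$ vanishes at every $\Sigma\in\mathcal M(G,c)$. If $c(ij)\neq c(kl)$, then $\mathrm{ecr}_c(ij,kl;A,B)$ does not vanish at a generic $\Sigma\in\mathcal M(G,c)$ (i.e. it vanishes only on a proper algebraic subset of $\mathcal M(G,c)$).
   Context: $G=(V,E)$ a DAG, $c:V\sqcup E\to C$ with $c(V)\cap c(E)=\emptyset$. $\mathcal M(G,c)$ is the set of $\phi_G(\Omega,\Lambda)=(I-\Lambda)^{-T}\Omega(I-\Lambda)^{-1}$ with $\Omega=\mathrm{diag}(\omega_i)$, $\omega_i>0$, $\lambda_{ij}=0$ for $ij\notin E$, $\omega_i=\omega_k$ when $c(i)=c(k)$, $\lambda_{ij}=\lambda_{kl}$ when $c(ij)=c(kl)$. With $\Sigma_{ij|K}$ the submatrix with rows $(i,K)$, columns $(j,K)$, let $\lambda_{ij|A}(\Sigma)=|\Sigma_{ij|A\setminus\{i\}}|/|\Sigma_A|$; $\mathcal A_G(ij)$ is the set of $A\subseteq V$ with $\lambda_{ij|A}(\phi_G(\Omega,\Lambda))=\lambda_{ij}$ for all parameters of the uncolored model. $\mathrm{ecr}_c(ij,kl;A,B)=|\Sigma_A|\,|\Sigma_B|\,(\lambda_{ij|A}(\Sigma)-\lambda_{kl|B}(\Sigma))$. *)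

From Stdlib Require Import Reals.
From mathcomp Require Import all_boot all_algebra.
From mathcomp Require Import Rstruct.
From mathcomp Require Import mpoly.

Set Implicit Arguments.
Unset Strict Implicit.
Unset Printing Implicit Defensive.

Import GRing.Theory Num.Theory.
Local Open Scope ring_scope.

(* It is a DAG iff it has no directed
   cycle: whenever i -> j is an edge, i is not reachable from j.
   (This also excludes self-loops.) *)
Definition is_DAG (n : nat) (e : rel 'I_n) : Prop :=
  forall i j : 'I_n, e i j -> ~~ connect e j i.

(* A coloring c : V ⊔ E -> C given by its vertex part cV and its edge part
   cE (only the values of cE on edges are relevant), with c(V) ∩ c(E) = ∅. *)
Definition is_coloring (n : nat) (e : rel 'I_n) (C : Type)
    (cV : 'I_n -> C) (cE : 'I_n -> 'I_n -> C) : Prop :=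
  forall v i j : 'I_n, e i j -> cV v <> cE i j.

Definition phiG (n : nat) (omega : 'rV[R]_n) (Lambda : 'M[R]_n) : 'M[R]_n :=
  invmx ((1%:M - Lambda)^T) *m diag_mx omega *m invmx (1%:M - Lambda).

Definition uncolored_params (n : nat) (e : rel 'I_n)
    (omega : 'rV[R]_n) (Lambda : 'M[R]_n) : Prop :=
  (forall i : 'I_n, 0 < omega 0 i) /\
  (forall i j : 'I_n, ~~ e i j -> Lambda i j = 0).

Definition colored_params (n : nat) (e : rel 'I_n) (C : Type)
    (cV : 'I_n -> C) (cE : 'I_n -> 'I_n -> C)
    (omega : 'rV[R]_n) (Lambda : 'M[R]_n) : Prop :=
  uncolored_params e omega Lambda /\
  (forall i k : 'I_n, cV i = cV k -> omega 0 i = omega 0 k) /\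
  (forall i j k l : 'I_n, e i j -> e k l -> cE i j = cE k l ->
      Lambda i j = Lambda k l).

Definition in_model (n : nat) (e : rel 'I_n) (C : Type)
    (cV : 'I_n -> C) (cE : 'I_n -> 'I_n -> C) (S : 'M[R]_n) : Prop :=
  exists (omega : 'rV[R]_n) (Lambda : 'M[R]_n),
    colored_params e cV cE omega Lambda /\ S = phiG omega Lambda.

(* Determinant of the submatrix of S with rows listed by r and columns
   listed by c (in the given orders); r and c are meant to have the same
   length (entries outside the range are 0). *)
Definition subdet (n : nat) (S : 'M[R]_n) (r c : seq 'I_n) : R :=
  \det (\matrix_(a < size r, b < size r)
          match nth None (map Some r) a, nth None (map Some c) b with
          | Some x, Some y => S x y
          | _, _ => 0
          end).

(* |Sigma_{ij|K}|: rows (i, K), columns (j, K), K listed in increasing order. *)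
Definition det_ijK (n : nat) (S : 'M[R]_n) (i j : 'I_n) (K : {set 'I_n}) : R :=
  subdet S (i :: enum K) (j :: enum K).

Definition det_A (n : nat) (S : 'M[R]_n) (A : {set 'I_n}) : R :=
  subdet S (enum A) (enum A).

Definition lambda_cond (n : nat) (S : 'M[R]_n) (i j : 'I_n) (A : {set 'I_n}) : R :=
  det_ijK S i j (A :\ i) / det_A S A.

Definition AG (n : nat) (e : rel 'I_n) (i j : 'I_n) (A : {set 'I_n}) : Prop :=
  forall (omega : 'rV[R]_n) (Lambda : 'M[R]_n),
    uncolored_params e omega Lambda ->
    lambda_cond (phiG omega Lambda) i j A = Lambda i j.

Definition ecr (n : nat) (i j k l : 'I_n) (A B : {set 'I_n}) (S : 'M[R]_n) : R :=
  det_A S A * det_A S B * (lambda_cond S i j A - lambda_cond S k l B).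

Definition mx_eval (n : nat) (p : {mpoly R[n * n]}) (S : 'M[R]_n) : R :=
  p.@[fun k => mxvec S 0 k].

Definition in_zero_set (n : nat) (ps : seq {mpoly R[n * n]}) (S : 'M[R]_n) : Prop :=
  forall p, p \in ps -> mx_eval p S = 0.

(* Under an equality constraint lambda_ij = lambda_kl both conditional
   regression coefficients equal the common edge weight, so ecr vanishes on
   the model.  For distinct edge colours, clearing the denominators of ecr
   gives a polynomial in the entries of Sigma that is a multiple of ecr; it
   does not vanish at the model point with unit error variances, weight 1 on
   the colour of ij, weight 2 on the colour of kl and 0 elsewhere, where the
   two coefficients are 1 and 2 and both principal minors are non-zero. *)

From Stdlib Require Import Reals.
From mathcomp Require Import all_boot all_algebra.
From mathcomp Require Import Rstruct.
From mathcomp Require Import mpoly.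
From Stdlib Require Import ClassicalEpsilon.
From mathcomp Require Import ring.
Set Implicit Arguments.
Unset Strict Implicit.
Local Open Scope ring_scope.
Import GRing.Theory Num.Theory.

Definition subdet_over {T : comNzRingType} {n : nat} (S : 'M[T]_n)
    (r c : seq 'I_n) : T :=
  \det (\matrix_(a < size r, b < size r)
          match nth None (map Some r) a, nth None (map Some c) b with
          | Some x, Some y => S x y
          | _, _ => 0
          end).

Definition mx_indet (n : nat) : 'M[{mpoly R[n * n]}]_n :=
  \matrix_(x, y) 'X_(mxvec_index x y).

Lemma mx_eval_subdet (n : nat) (S : 'M[R]_n) (r c : seq 'I_n) :
  mx_eval (subdet_over (mx_indet n) r c) S = subdet S r c.
Proof.
rewrite /mx_eval /subdet_over /subdet -det_map_mx; congr (\det _).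
apply/matrixP=> a b; rewrite !mxE.
case: (nth None (map Some r) a) => [x|]; case: (nth None (map Some c) b) => [y|] //=;
  by rewrite ?raddf0 // mxE mevalXU mxvecE.
Qed.

Lemma mulr_subr_div (F : fieldType) (a b u v : F) : a != 0 -> b != 0 ->
  b * u - a * v = a * b * (u / a - v / b).
Proof. by move=> a0 b0; field; apply/andP. Qed.

Section ClearedEcr.

Variables (n : nat) (i j k l : 'I_n) (A B : {set 'I_n}).

Let minor (r c : seq 'I_n) := subdet_over (mx_indet n) r c.

(* ecr already carries the factor |Sigma_A| |Sigma_B|; multiplying by it once
   more clears both quotients lambda_{ij|A}, lambda_{kl|B}. *)
Definition ecr_poly : {mpoly R[n * n]} :=
  let dA := minor (enum A) (enum A) in
  let dB := minor (enum B) (enum B) in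
  dA * dB * (dB * minor (i :: enum (A :\ i)) (j :: enum (A :\ i))
             - dA * minor (k :: enum (B :\ k)) (l :: enum (B :\ k))).

Lemma mx_eval_ecr_poly (S : 'M[R]_n) :
  mx_eval ecr_poly S = det_A S A * det_A S B * ecr i j k l A B S.
Proof.
rewrite /mx_eval /ecr_poly !(rmorphM, rmorphB) /= -!/(mx_eval _ S).
rewrite !mx_eval_subdet /ecr /lambda_cond /det_ijK -!/(det_A S _).
have [->|a0] := eqVneq (det_A S A) 0; first by rewrite !mul0r.
have [->|b0] := eqVneq (det_A S B) 0; first by rewrite !(mulr0, mul0r).
by rewrite mulr_subr_div.
Qed.

End ClearedEcr.

Lemma AG_det_neq0 (n : nat) (e : rel 'I_n) (i j : 'I_n) (A : {set 'I_n})
    (omega : 'rV[R]_n) (Lambda : 'M[R]_n) :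
  AG e i j A -> uncolored_params e omega Lambda -> Lambda i j != 0 ->
  det_A (phiG omega Lambda) A != 0.
Proof.
move=> HA Hu; rewrite -(HA _ _ Hu); apply: contra_neq => dA0.
(* The arithmetic in lambda_cond and ecr is Stdlib's (Rdiv, Rminus, Rmult);
   the R*E lemmas of Rstruct turn it into ring operations. *)
by rewrite /lambda_cond dA0 RdivE invr0 mulr0.
Qed.

Lemma ecr_eq0_same_color (n : nat) (e : rel 'I_n) (C : Type)
    (cV : 'I_n -> C) (cE : 'I_n -> 'I_n -> C) (i j k l : 'I_n)
    (A B : {set 'I_n}) (S : 'M[R]_n) :
  e i j -> e k l -> AG e i j A -> AG e k l B -> cE i j = cE k l ->
  in_model e cV cE S -> ecr i j k l A B S = 0.
Proof.
move=> Hij Hkl HA HB Hc [om [La [[Hu [_ HL]] ->]]].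
by rewrite /ecr (HA _ _ Hu) (HB _ _ Hu) (HL _ _ _ _ Hij Hkl Hc) RminusE !RmultE subrr mulr0.
Qed.

Section TwoColorPoint.

Variables (n : nat) (e : rel 'I_n) (C : Type).
Variables (cV : 'I_n -> C) (cE : 'I_n -> 'I_n -> C) (i j k l : 'I_n).
Hypotheses (Hij : e i j) (Hkl : e k l) (Hc : cE i j <> cE k l).

Definition two_color_lambda : 'M[R]_n := \matrix_(x, y)
  if e x y then
    if excluded_middle_informative (cE x y = cE i j) then 1
    else if excluded_middle_informative (cE x y = cE k l) then 2 else 0
  else 0.

Definition unit_omega : 'rV[R]_n := const_mx 1.

Lemma two_color_uncolored : uncolored_params e unit_omega two_color_lambda.
Proof.
split=> [x|x y /negbTE exy]; first by rewrite mxE ltr01.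
by rewrite mxE exy.
Qed.

Lemma two_color_in_model :
  in_model e cV cE (phiG unit_omega two_color_lambda).
Proof.
exists unit_omega, two_color_lambda; split=> //.
split; first exact: two_color_uncolored.
split=> [x y _|x y x' y' exy exy' hc]; first by rewrite !mxE.
by rewrite !mxE exy exy' hc.
Qed.

Lemma two_color_lambda_ij : two_color_lambda i j = 1.
Proof. by rewrite mxE Hij; destruct excluded_middle_informative. Qed.

Lemma two_color_lambda_kl : two_color_lambda k l = 2.
Proof.
rewrite mxE Hkl; destruct excluded_middle_informative as [h|nh]; first by case: Hc.
by destruct excluded_middle_informative.
Qed.

End TwoColorPoint.

Theorem proposition5p2 (n : nat) (e : rel 'I_n) (C : Type)
    (cV : 'I_n -> C) (cE : 'I_n -> 'I_n -> C)
    (HDAG : is_DAG e) (Hcol : is_coloring e cV cE)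
    (i j k l : 'I_n) (Hij : e i j) (Hkl : e k l)
    (A B : {set 'I_n}) (HA : AG e i j A) (HB : AG e k l B) :
  (cE i j = cE k l ->
     forall S : 'M[R]_n, in_model e cV cE S -> ecr i j k l A B S = 0) /\
  (cE i j <> cE k l ->
     exists ps : seq {mpoly R[n * n]},
       (forall S : 'M[R]_n, in_model e cV cE S -> ecr i j k l A B S = 0 ->
          in_zero_set ps S) /\
       (exists S : 'M[R]_n, in_model e cV cE S /\ ~ in_zero_set ps S)).
Proof.
split=> [Hc S|Hc]; first exact: ecr_eq0_same_color.
exists [:: ecr_poly i j k l A B]; split.
  move=> S _ He p; rewrite inE => /eqP ->.
  by rewrite mx_eval_ecr_poly He mulr0.
set om := unit_omega n; set La := two_color_lambda e cE i j k l.
have Hu : uncolored_params e om La := two_color_uncolored e cE i j k l.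
have Lij : La i j = 1 := two_color_lambda_ij cE k l Hij.
have Lkl : La k l = 2 := two_color_lambda_kl Hkl Hc.
exists (phiG om La); split; first exact: two_color_in_model.
move=> /(_ (ecr_poly i j k l A B)); rewrite inE eqxx => /(_ isT).
have a0 : det_A (phiG om La) A != 0.
  by apply: (AG_det_neq0 HA Hu); rewrite Lij oner_neq0.
have b0 : det_A (phiG om La) B != 0.
  by apply: (AG_det_neq0 HB Hu); rewrite Lkl pnatr_eq0.
rewrite mx_eval_ecr_poly /ecr (HA _ _ Hu) (HB _ _ Hu) Lij Lkl RminusE !RmultE.
by apply/eqP; rewrite !mulf_neq0 // ltr0_neq0 // subr_lt0 ltr1n.
Qed.
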